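(* Let $\triangle=(V,E,T)$ be a triangulation of a polygonal domain $\Theta\subset\mathbb{R}^2$ in which every triangle has at least one interior edge, and let $\mathbb{S}_2$ be the set of all functions obtained from the $\mathbb{S}_2$-construction (see context) as the linear polynomials $Q_1,\dots,Q_{n_v}$ range over all linear polynomials. Then: (i) $\mathbb{S}_2$ is a linear subspace of $\{S\in C^0(\Theta): S|_{t}\in\mathbb{P}_3 \text{ for all } t\in T\}$; (ii) every $S\in\mathbb{S}_2$ is $C^1$-smooth at each vertex $v_i$, in the sense that all polynomial pieces $S|_t$ with $v_i\in t$ have the same value and the same gradient at $v_i$, namely $S(v_i)=Q_i(v_i)$ and $\nabla S(v_i)=\nabla Q_i$; (iii) $\dim \mathbb{S}_2 = 3n_v$; (iv) $\mathbb{P}_3\subset \mathbb{S}_2$; more precisely, if $P\in\mathbb{P}_3$ and each $Q_i$ is chosen as the first-order Taylor polynomial $Q_i(p)=P(v_i)+\nabla P(v_i)\cdot(p-v_i)$, then the constructed spline equals $P$ on $\Theta$.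
   Context: A triangulation $\triangle=(V,E,T)$ of a polygonal domain $\Theta$ consists of vertices $V=\{v_1,\dots,v_{n_v}\}$, edges $E$ (segments between two vertices) and nondegenerate triangles $T$, whose union is $\Theta$ and such that two distinct triangles intersect in the empty set, a common vertex, or a common edge; $E,V$ are exactly the edges and vertices of the triangles. $E^b\subseteq E$ is the set of edges on $\partial\Theta$; every interior edge $e\in E\setminus E^b$ is shared by exactly two triangles. $\mathbb{P}_d$ denotes bivariate polynomials of total degree $\le d$. Bernstein–Bézier form: for an ordered triangle $\langle u_0,u_1,u_2\rangle$ with barycentric coordinates $(\tau_0,\tau_1,\tau_2)$ and $\mathbb{D}_3=\{d=(d_0,d_1,d_2)\in\mathbb{N}_0^3: d_0+d_1+d_2=3\}$, every $p\in\mathbb{P}_3$ is uniquely $p=\sum_{d\in\mathbb{D}_3} c_d\, \frac{3!}{d_0!d_1!d_2!}\tau_0^{d_0}\tau_1^{d_1}\tau_2^{d_2}$; we call $c_d$ the coefficient at the domain point $\xi_d=(d_0u_0+d_1u_1+d_2u_2)/3$ (this labelling does not depend on the ordering of the vertices). Data: a linear polynomial $Q_i$ is given for each vertex $v_i$. For vertices $u,w$ joined by an edge write $p_u=Q_u(u)$ and $p_{u,w}=Q_u(\tfrac23 u+\tfrac13 w)$ (here $Q_u$ is the polynomial of the vertex $u$). Functional $\Gamma$: let $t_m=[v_i,v_j,v_k]\in T$ and let $e=[v_i,v_j]$ be an interior edge, shared with $t_{m'}=[v_i,v_j,v_{k'}]$. Let $(a_0,a_1,a_2)$ be the barycentric coordinates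 of $v_{k'}$ with respect to $(v_i,v_j,v_k)$ (so $a_2<0$). Define $\Gamma(t_m,e)=\frac{1}{2a_2(1-a_2)}\Big(p_{k',i}+p_{k',j}-a_0^2(p_i+p_{i,j})-2a_0a_1(p_{i,j}+p_{j,i})-a_1^2(p_{j,i}+p_j)-2a_0a_2\,p_{i,k}-2a_1a_2\,p_{j,k}-a_2^2(p_{k,i}+p_{k,j})\Big)$, where $p_{i,j}$ abbreviates $p_{v_i,v_j}$ etc. $\mathbb{S}_2$-construction: on each $t_m=[v_i,v_j,v_k]\in T$, $S|_{t_m}$ is the cubic whose Bernstein coefficients are: at the domain point $v_u$ the value $p_u$, at $\tfrac23 v_u+\tfrac13 v_w$ the value $p_{u,w}$ (for all ordered pairs of distinct vertices $u,w$ of $t_m$), and at the centroid $\tfrac13(v_i+v_j+v_k)$ the average of $\Gamma(t_m,e)$ over the interior edges $e$ of $t_m$. *)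

From HB Require Import structures.
From mathcomp Require Import all_boot all_order all_algebra.
From mathcomp Require Import mpoly.

Set Implicit Arguments.
Unset Strict Implicit.
Unset Printing Implicit Defensive.

Import Order.TTheory GRing.Theory Num.Theory.
Local Open Scope ring_scope.

(* twice the signed area of the triangle (a,b,c); points are pairs (x,y) *)
Definition area2 (T : comRingType) (a b c : T * T) : T :=
  (b.1 - a.1) * (c.2 - a.2) - (b.2 - a.2) * (c.1 - a.1).

Definition i0 : 'I_3 := @Ordinal 3 0 isT.
Definition i1 : 'I_3 := @Ordinal 3 1 isT.
Definition i2 : 'I_3 := @Ordinal 3 2 isT.

Section Defs.
Variable R : realFieldType.
Local Notation point := (R * R)%type.
Local Notation poly2 := {mpoly R[2]}.

Definition coord (x : point) (r : 'I_2) : R := if val r == 0%N then x.1 else x.2.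

Definition evalp (P : poly2) (x : point) : R := P.@[coord x].

(* P in P_d  <->  total degree <= d  <->  msize P <= d+1 *)
Definition inPd (d : nat) (P : poly2) : bool := (msize P <= d.+1)%N.

Definition bary (u0 u1 u2 x : point) : R * R * R :=
  let A := area2 u0 u1 u2 in
  (area2 x u1 u2 / A, area2 u0 x u2 / A, area2 u0 u1 x / A).

Definition Xpt : poly2 * poly2 := ('X_(Ordinal (isT : 0 < 2)%N), 'X_(Ordinal (isT : 1 < 2)%N)).
Definition Cpt (x : point) : poly2 * poly2 := (x.1%:MP, x.2%:MP).
Definition baryP (u0 u1 u2 : point) : poly2 * poly2 * poly2 :=
  let iA := (area2 u0 u1 u2)^-1%:MP in
  (iA * area2 Xpt (Cpt u1) (Cpt u2), iA * area2 (Cpt u0) Xpt (Cpt u2),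
   iA * area2 (Cpt u0) (Cpt u1) Xpt).

Definition BBcubic (u0 u1 u2 : point) (c : nat -> nat -> nat -> R) : poly2 :=
  let '(t0, t1, t2) := baryP u0 u1 u2 in
  \sum_(d0 < 4) \sum_(d1 < 4 - d0)
     (c d0 d1 (3 - d0 - d1)%N * ((3`!)%:R / (d0`! * d1`! * (3 - d0 - d1)`!)%:R))
       *: (t0 ^+ d0 * t1 ^+ d1 * t2 ^+ (3 - d0 - d1)).

Variables (nv nt : nat) (vert : 'I_nv -> point) (tri : 'I_nt -> 'I_3 -> 'I_nv).

Definition tv (m : 'I_nt) (k : 'I_3) : point := vert (tri m k).
Definition tri_has (m : 'I_nt) (i : 'I_nv) : bool := [exists k, tri m k == i].

Definition in_tri (m : 'I_nt) (x : point) : Prop :=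
  exists l0 l1 l2 : R, [/\ 0 <= l0, 0 <= l1, 0 <= l2, l0 + l1 + l2 = 1 &
    x = (l0 * (tv m i0).1 + l1 * (tv m i1).1 + l2 * (tv m i2).1,
         l0 * (tv m i0).2 + l1 * (tv m i1).2 + l2 * (tv m i2).2)].

Definition in_seg (a b x : point) : Prop :=
  exists l : R, [/\ 0 <= l, l <= 1 &
    x = ((1 - l) * a.1 + l * b.1, (1 - l) * a.2 + l * b.2)].

Definition conforming : Prop :=
  forall m m' : 'I_nt, m != m' ->
    (forall x, ~ (in_tri m x /\ in_tri m' x)) \/
    (exists i, [/\ tri_has m i, tri_has m' i &
        forall x, in_tri m x -> in_tri m' x -> x = vert i]) \/
    (exists i j, [/\ i != j, tri_has m i && tri_has m j, tri_has m' i && tri_has m' j &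
        forall x, in_tri m x -> in_tri m' x -> in_seg (vert i) (vert j) x]).

(* (V,E,T) is a triangulation of Theta := union of its triangles *)
Definition is_triangulation : Prop :=
  [/\ injective vert,
      forall m, area2 (tv m i0) (tv m i1) (tv m i2) != 0,
      forall i, exists m, tri_has m i,
      conforming &
      forall i j, i != j -> (#|[set m | tri_has m i && tri_has m j]| <= 2)%N].

Definition nbr (m : 'I_nt) (i j : 'I_nv) : option 'I_nt :=
  [pick m' | (m' != m) && tri_has m' i && tri_has m' j].
Definition interior_edge (m : 'I_nt) (i j : 'I_nv) : bool := nbr m i j.
Definition opp (m' : 'I_nt) (i j : 'I_nv) : 'I_nv :=
  odflt i [pick k | tri_has m' k && (k != i) && (k != j)].

Definition every_tri_has_interior_edge : Prop :=
  forall m, [|| interior_edge m (tri m i0) (tri m i1),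
                interior_edge m (tri m i1) (tri m i2) |
                interior_edge m (tri m i2) (tri m i0)].

Section Construction.
Variable Q : 'I_nv -> poly2.

Definition pv (u : 'I_nv) : R := evalp (Q u) (vert u).
Definition pe (u w : 'I_nv) : R :=
  evalp (Q u) (2/3 * (vert u).1 + 1/3 * (vert w).1, 2/3 * (vert u).2 + 1/3 * (vert w).2).

Definition Gamma (m : 'I_nt) (i j k : 'I_nv) : R :=
  match nbr m i j with
  | Some m' =>
    let k' := opp m' i j in
    let '(a0, a1, a2) := bary (vert i) (vert j) (vert k) (vert k') in
    (2 * a2 * (1 - a2))^-1 *
      (pe k' i + pe k' j - a0 ^+ 2 * (pv i + pe i j) - 2 * a0 * a1 * (pe i j + pe j i)
       - a1 ^+ 2 * (pe j i + pv j) - 2 * a0 * a2 * pe i k - 2 * a1 * a2 * pe j k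
       - a2 ^+ 2 * (pe k i + pe k j))
  | None => 0
  end.

Definition centroid_coef (m : 'I_nt) : R :=
  let a := tri m i0 in let b := tri m i1 in let c := tri m i2 in
  let ie := [seq e <- [:: (a, b, c); (b, c, a); (c, a, b)] | interior_edge m e.1.1 e.1.2] in
  (\sum_(e <- ie) Gamma m e.1.1 e.1.2 e.2) / (size ie)%:R.

Definition BBcoef (pc : R) (a b c : 'I_nv) (d0 d1 d2 : nat) : R :=
  match d0, d1, d2 with
  | 3, 0, 0 => pv a | 0, 3, 0 => pv b | 0, 0, 3 => pv c
  | 2, 1, 0 => pe a b | 1, 2, 0 => pe b a
  | 2, 0, 1 => pe a c | 1, 0, 2 => pe c a
  | 0, 2, 1 => pe b c | 0, 1, 2 => pe c b
  | _, _, _ => pc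
  end.

Definition spline : {ffun 'I_nt -> poly2} :=
  [ffun m => BBcubic (tv m i0) (tv m i1) (tv m i2)
               (BBcoef (centroid_coef m) (tri m i0) (tri m i1) (tri m i2))].
End Construction.

Definition inS2 (s : {ffun 'I_nt -> poly2}) : Prop :=
  exists Q : 'I_nv -> poly2, (forall i, inPd 1 (Q i)) /\ s = spline Q.

Definition C0cubic (s : {ffun 'I_nt -> poly2}) : Prop :=
  (forall m, inPd 3 (s m)) /\
  (forall m m' x, in_tri m x -> in_tri m' x -> evalp (s m) x = evalp (s m') x).

Definition has_dim (P : {ffun 'I_nt -> poly2} -> Prop) (n : nat) : Prop :=
  exists b : 'I_n -> {ffun 'I_nt -> poly2},
    [/\ forall k, P (b k),
        forall c : 'I_n -> R, \sum_(k < n) c k *: b k = 0 -> forall k, c k = 0 &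
        forall s, P s -> exists c : 'I_n -> R, s = \sum_(k < n) c k *: b k].

Definition taylor1 (P : poly2) (i : 'I_nv) : poly2 :=
  (evalp P (vert i))%:MP +
  \sum_(r < 2) (evalp (P^`M(r)) (vert i))%:MP * ('X_r - (coord (vert i) r)%:MP).

End Defs.

(* On each triangle the spline is a cubic in Bernstein-Bezier form whose
   coefficients depend linearly on the data, so S_2 is a space of piecewise cubics.  The
   coefficients at a vertex u and at the two domain points next to it are values of the
   affine Q_u, which forces the value and gradient of every piece at u to be those of Q_u;
   on an edge a piece only depends on the coefficients of that edge, whence continuity.  In
   particular S = 0 forces every Q_i = 0, so S_2 is an injective linear image of the
   3 n_v-dimensional space of affine data.  Conversely, a cubic P is a Bernstein-Bezier cubic
   on every triangle, its Taylor data reproduce its vertex and edge coefficients, and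
   Gamma(t_m, e) recovers its centroid coefficient exactly; this last identity requires the
   barycentric coordinate a_2 of the opposite vertex to be neither 0 nor 1, which follows
   from non-degeneracy and conformity of the triangulation. *)

From Pilot Require Import Defs.
From HB Require Import structures.
From mathcomp Require Import all_boot all_order all_algebra.
From mathcomp Require Import mpoly.
From mathcomp Require Import ring lra zify.
From Stdlib Require Import FunctionalExtensionality.

Set Implicit Arguments.
Unset Strict Implicit.
Unset Printing Implicit Defensive.

Import Order.TTheory GRing.Theory Num.Theory.
Local Open Scope ring_scope.

Definition ix : 'I_2 := @Ordinal 2 0 isT.
Definition iy : 'I_2 := @Ordinal 2 1 isT.

Lemma ord2P (r : 'I_2) : r = ix \/ r = iy.
Proof. by case: r => [[|[|]] //= ?]; [left|right]; apply: val_inj. Qed.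

Lemma ord3P (p : 'I_3) : [\/ p = i0, p = i1 | p = i2].
Proof. by case: p => [[|[|[|]]] //= ?]; [apply: Or31|apply: Or32|apply: Or33]; apply: val_inj. Qed.

Section Affine.
Variable R : realFieldType.
Local Notation point := (R * R)%type.
Local Notation poly2 := {mpoly R[2]}.

Definition aff (k a b : R) : poly2 := k%:MP + a *: 'X_ix + b *: 'X_iy.

Lemma evalp_aff k a b (x : point) : evalp (aff k a b) x = k + a * x.1 + b * x.2.
Proof. by rewrite /evalp /aff !mevalD !mevalZ mevalC !mevalXU. Qed.

Lemma mderivXU (i r : 'I_2) : ('X_i : poly2)^`M(r) = ((i == r)%:R)%:MP.
Proof.
rewrite mderivX mnm1E; case: eqP => [->|_]; last by rewrite scale0r mpolyC0.
have -> : (U_(r) - U_(r))%MM = 0%MM by apply/mnmP => j; rewrite mnmBE subnn mnm0E.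
by rewrite mpolyX0 scale1r mpolyC1.
Qed.

Lemma evalp_deriv_aff k a b r (x : point) : evalp ((aff k a b)^`M(r)) x = Defs.coord (a, b) r.
Proof.
rewrite /evalp /aff !mderivD !mderivZ mderivC !mderivXU !mevalD !mevalZ !mevalC.
by case: (ord2P r) => ->; rewrite /Defs.coord /=; ring.
Qed.

Lemma inPdD d (p q : poly2) : inPd d p -> inPd d q -> inPd d (p + q).
Proof. by rewrite /inPd => hp hq; apply: leq_trans (msizeD_le _ _) _; rewrite geq_max hp hq. Qed.

Lemma inPdZ d a (p : poly2) : inPd d p -> inPd d (a *: p).
Proof. exact: leq_trans (msizeZ_le _ _). Qed.

Lemma inPdM d e (p q : poly2) : inPd d p -> inPd e q -> inPd (d + e) (p * q).
Proof.
have [->|p0] := eqVneq p 0; first by rewrite mul0r /inPd msize0.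
have [->|q0] := eqVneq q 0; first by rewrite mulr0 /inPd msize0.
rewrite /inPd msizeM // => hp hq.
by rewrite -subn1 leq_subLR; apply: leq_trans (leq_add hp hq) _; lia.
Qed.

Lemma inPd1_aff k a b : inPd 1 (aff k a b).
Proof.
have hX (i : 'I_2) c : inPd 1 (c *: 'X_i : poly2) by apply: inPdZ; rewrite /inPd msizeX mdeg1.
by rewrite /aff; do 2?apply: inPdD => //; rewrite /inPd msizeC; case: (_ != 0).
Qed.

Lemma affE (Q : poly2) : inPd 1 Q -> Q = aff Q@_0 Q@_U_(ix) Q@_U_(iy).
Proof.
move=> hQ; apply/mpolyP => m; rewrite /aff !mcoeffD mcoeffC !mcoeffZ !mcoeffX.
have [->|m0] := eqVneq m 0%MM; first by rewrite !mnm1_eq0 /=; ring.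
have [/mdeg1P [j /eqP ->]|m1] := boolP (mdeg m == 1%N).
  by rewrite !eq_mnm1; case: (ord2P j) => ->; rewrite /=; ring.
have m2 : (2 <= mdeg m)%N.
  by move: m1 (mdeg_eq0 m); rewrite (negbTE m0); case: (mdeg m) => [|[]].
have /negbTE Qm : m \notin msupp Q by apply: msize_mdeg_ge; apply: leq_trans hQ m2.
have Um (j : 'I_2) : (U_(j)%MM == m) = false by apply: contraTF m2 => /eqP <-; rewrite mdeg1.
have -> : Q@_m = 0 by apply/eqP; rewrite mcoeff_eq0 Qm.
by rewrite !Um /= !mulr0 !addr0.
Qed.

Lemma affZ s k a b : s *: aff k a b = aff (s * k) (s * a) (s * b).
Proof. by rewrite /aff -!mul_mpolyC !rmorphM /=; ring. Qed.

Lemma affD k a b k' a' b' : aff k a b + aff k' a' b' = aff (k + k') (a + a') (b + b').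
Proof. by rewrite /aff raddfD !scalerDl /=; ring. Qed.

Lemma aff_eq0 k a b : aff k a b = 0 -> [/\ k = 0, a = 0 & b = 0].
Proof.
move=> e; have := evalp_aff k a b (0, 0); have := evalp_deriv_aff k a b ix (0, 0).
have := evalp_deriv_aff k a b iy (0, 0); rewrite e !mderiv0 /evalp meval0 /Defs.coord /=.
by move=> <- <-; rewrite !mulr0 !addr0 => <-.
Qed.

End Affine.

Section BernsteinBezier.
Variable R : realFieldType.
Local Notation point := (R * R)%type.
Local Notation poly2 := {mpoly R[2]}.
Implicit Types (c : nat -> nat -> nat -> R) (x y w a b : point).

Lemma area2_rot (T : comRingType) (a b c : T * T) : area2 a b c = area2 b c a.
Proof. by rewrite /area2; ring. Qed.

Definition bbpoly c (t0 t1 t2 : poly2) : poly2 :=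
  c 3 0 0 *: (t0 * t0 * t0) + (3 * c 2 1 0) *: (t0 * t0 * t1)
  + (3 * c 2 0 1) *: (t0 * t0 * t2) + (3 * c 1 2 0) *: (t0 * t1 * t1)
  + (6 * c 1 1 1) *: (t0 * t1 * t2) + (3 * c 1 0 2) *: (t0 * t2 * t2)
  + c 0 3 0 *: (t1 * t1 * t1) + (3 * c 0 2 1) *: (t1 * t1 * t2)
  + (3 * c 0 1 2) *: (t1 * t2 * t2) + c 0 0 3 *: (t2 * t2 * t2).

Definition bbval c (b : R * R * R) : R :=
  let: (b0, b1, b2) := b in
  c 3 0 0 * (b0 * b0 * b0) + 3 * c 2 1 0 * (b0 * b0 * b1) + 3 * c 2 0 1 * (b0 * b0 * b2)
  + 3 * c 1 2 0 * (b0 * b1 * b1) + 6 * c 1 1 1 * (b0 * b1 * b2) + 3 * c 1 0 2 * (b0 * b2 * b2)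
  + c 0 3 0 * (b1 * b1 * b1) + 3 * c 0 2 1 * (b1 * b1 * b2) + 3 * c 0 1 2 * (b1 * b2 * b2)
  + c 0 0 3 * (b2 * b2 * b2).

Definition bbgrad c (b : R * R * R) : R * R * R :=
  let: (b0, b1, b2) := b in
  (3 * c 3 0 0 * (b0 * b0) + 6 * c 2 1 0 * (b0 * b1) + 6 * c 2 0 1 * (b0 * b2)
   + 3 * c 1 2 0 * (b1 * b1) + 6 * c 1 1 1 * (b1 * b2) + 3 * c 1 0 2 * (b2 * b2),
   3 * c 2 1 0 * (b0 * b0) + 6 * c 1 2 0 * (b0 * b1) + 6 * c 1 1 1 * (b0 * b2)
   + 3 * c 0 3 0 * (b1 * b1) + 6 * c 0 2 1 * (b1 * b2) + 3 * c 0 1 2 * (b2 * b2),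
   3 * c 2 0 1 * (b0 * b0) + 6 * c 1 1 1 * (b0 * b1) + 6 * c 1 0 2 * (b0 * b2)
   + 3 * c 0 2 1 * (b1 * b1) + 6 * c 0 1 2 * (b1 * b2) + 3 * c 0 0 3 * (b2 * b2)).

Definition dot3 (g v : R * R * R) : R :=
  let: (g0, g1, g2) := g in let: (v0, v1, v2) := v in g0 * v0 + g1 * v1 + g2 * v2.

Lemma evalp_bbpoly c (t0 t1 t2 : poly2) x :
  evalp (bbpoly c t0 t1 t2) x = bbval c (evalp t0 x, evalp t1 x, evalp t2 x).
Proof. by rewrite /evalp /bbpoly !mevalD !mevalZ !mevalM /bbval; ring. Qed.

Lemma deriv_bbpoly c (t0 t1 t2 : poly2) r x :
  evalp ((bbpoly c t0 t1 t2)^`M(r)) x =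
  dot3 (bbgrad c (evalp t0 x, evalp t1 x, evalp t2 x))
       (evalp (t0^`M(r)) x, evalp (t1^`M(r)) x, evalp (t2^`M(r)) x).
Proof.
by rewrite /evalp /bbpoly !mderivD !mderivZ !mderivM !(mevalD, mevalZ, mevalM) /dot3 /=; ring.
Qed.

Definition barycoord (a b : point) (A : R) : poly2 :=
  aff (area2 (0, 0) a b / A) ((a.2 - b.2) / A) ((b.1 - a.1) / A).

Lemma evalp_barycoord a b A x : evalp (barycoord a b A) x = area2 x a b / A.
Proof. by rewrite evalp_aff /area2 /=; ring. Qed.

Lemma baryPE (u0 u1 u2 : point) : let A := area2 u0 u1 u2 in
  baryP u0 u1 u2 = (barycoord u1 u2 A, barycoord u2 u0 A, barycoord u0 u1 A).
Proof.
by rewrite /baryP /barycoord /aff /area2 /Xpt /Cpt /=; congr (_, _, _); rewrite -!mul_mpolyC; ring.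
Qed.

Lemma BBcubicE (u0 u1 u2 : point) c : let A := area2 u0 u1 u2 in
  BBcubic u0 u1 u2 c = bbpoly c (barycoord u1 u2 A) (barycoord u2 u0 A) (barycoord u0 u1 A).
Proof.
have r66 : 6%:R / 6%:R = 1 :> R by rewrite divff // pnatr_eq0.
have r62 : 6%:R / 2%:R = 3 :> R by apply: (canLR (mulfK _)); rewrite ?pnatr_eq0 // -natrM.
rewrite /BBcubic baryPE /= !big_ord_recl !big_ord0 /bump /= !factE /= !mulnE /= r66 r62 divr1.
by rewrite /bbpoly -!mul_mpolyC; ring.
Qed.

Definition bary_deriv (u0 u1 u2 : point) (r : 'I_2) : R * R * R :=
  let A := area2 u0 u1 u2 in
  (Defs.coord ((u1.2 - u2.2) / A, (u2.1 - u1.1) / A) r,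
   Defs.coord ((u2.2 - u0.2) / A, (u0.1 - u2.1) / A) r,
   Defs.coord ((u0.2 - u1.2) / A, (u1.1 - u0.1) / A) r).

Lemma evalp_BBcubic (u0 u1 u2 : point) c x :
  evalp (BBcubic u0 u1 u2 c) x = bbval c (bary u0 u1 u2 x).
Proof.
rewrite BBcubicE evalp_bbpoly !evalp_barycoord /bary.
by rewrite (area2_rot u0 x u2) (area2_rot u0 u1 x) (area2_rot u1 x u0).
Qed.

Lemma deriv_BBcubic (u0 u1 u2 : point) c r x :
  evalp ((BBcubic u0 u1 u2 c)^`M(r)) x =
  dot3 (bbgrad c (bary u0 u1 u2 x)) (bary_deriv u0 u1 u2 r).
Proof.
rewrite BBcubicE deriv_bbpoly !evalp_barycoord /barycoord !evalp_deriv_aff /bary.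
by rewrite (area2_rot u0 x u2) (area2_rot u0 u1 x) (area2_rot u1 x u0).
Qed.

Lemma inPd3_BBcubic (u0 u1 u2 : point) c : inPd 3 (BBcubic u0 u1 u2 c).
Proof.
have cube (t t' t'' : poly2) : inPd 1 t -> inPd 1 t' -> inPd 1 t'' -> inPd 3 (t * t' * t'').
  by move=> ht ht' ht''; exact: inPdM (inPdM ht ht') ht''.
rewrite BBcubicE /bbpoly; repeat apply: inPdD.
all: by apply: inPdZ; apply: cube; apply: inPd1_aff.
Qed.

Lemma BBcubic_rot (u0 u1 u2 : point) c :
  BBcubic u1 u2 u0 (fun d0 d1 d2 => c d2 d0 d1) = BBcubic u0 u1 u2 c.
Proof. by rewrite !BBcubicE -(area2_rot u0 u1 u2) /bbpoly -!mul_mpolyC; ring. Qed.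

Lemma bary_vertices (u0 u1 u2 : point) : area2 u0 u1 u2 != 0 ->
  [/\ bary u0 u1 u2 u0 = (1, 0, 0), bary u0 u1 u2 u1 = (0, 1, 0)
    & bary u0 u1 u2 u2 = (0, 0, 1)].
Proof. by rewrite /bary /area2 => hA; split; congr (_, _, _); field. Qed.

Lemma bary_sum (u0 u1 u2 : point) x : area2 u0 u1 u2 != 0 ->
  (bary u0 u1 u2 x).1.1 + (bary u0 u1 u2 x).1.2 + (bary u0 u1 u2 x).2 = 1.
Proof. by rewrite /bary /area2 /= => hA; field. Qed.

Definition edge_pt x y : point := (2/3 * x.1 + 1/3 * y.1, 2/3 * x.2 + 1/3 * y.2).

Lemma bary_edge_pt (u0 u1 u2 : point) x y :
  bary u0 u1 u2 (edge_pt x y) =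
  (2/3 * (bary u0 u1 u2 x).1.1 + 1/3 * (bary u0 u1 u2 y).1.1,
   2/3 * (bary u0 u1 u2 x).1.2 + 1/3 * (bary u0 u1 u2 y).1.2,
   2/3 * (bary u0 u1 u2 x).2 + 1/3 * (bary u0 u1 u2 y).2).
Proof.
by rewrite /bary /edge_pt /area2 /=; congr (_, _, _); rewrite !mulrA -mulrDl; congr (_ / _); field.
Qed.

Definition tay1 (P : poly2) x y : R :=
  evalp P x + \sum_(r < 2) evalp (P^`M(r)) x * (Defs.coord y r - Defs.coord x r).

Definition bbtaylor c (b z : R * R * R) : R :=
  let: (b0, b1, b2) := b in let: (z0, z1, z2) := z in
  bbval c b + dot3 (bbgrad c b) (z0 - b0, z1 - b1, z2 - b2).

Lemma tay1_BBcubic (u0 u1 u2 : point) c x y : area2 u0 u1 u2 != 0 ->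
  tay1 (BBcubic u0 u1 u2 c) x y = bbtaylor c (bary u0 u1 u2 x) (bary u0 u1 u2 y).
Proof.
move=> hA; rewrite /tay1 !big_ord_recl big_ord0 !deriv_BBcubic evalp_BBcubic /bbtaylor.
case: (bbgrad c _) => [[g0 g1] g2]; rewrite /dot3 /bary /bary_deriv /Defs.coord /=.
by move: hA; rewrite /area2 => hA; field.
Qed.

Lemma BBcubic_taylor_u0 (u0 u1 u2 : point) c : area2 u0 u1 u2 != 0 ->
  let P := BBcubic u0 u1 u2 c in
  [/\ evalp P u0 = c 3 0 0, tay1 P u0 (edge_pt u0 u1) = c 2 1 0
    & tay1 P u0 (edge_pt u0 u2) = c 2 0 1].
Proof.
move=> hA P; rewrite /P evalp_BBcubic !tay1_BBcubic // !bary_edge_pt.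
case: (bary_vertices hA) => -> -> ->; rewrite /bbtaylor /bbval /bbgrad /dot3 /=.
by split; field.
Qed.

Lemma BBcubic_vertex (u0 u1 u2 : point) c (q : poly2) : area2 u0 u1 u2 != 0 -> inPd 1 q ->
  c 3 0 0 = evalp q u0 -> c 2 1 0 = evalp q (edge_pt u0 u1) -> c 2 0 1 = evalp q (edge_pt u0 u2) ->
  evalp (BBcubic u0 u1 u2 c) u0 = evalp q u0 /\
  forall r, evalp ((BBcubic u0 u1 u2 c)^`M(r)) u0 = evalp (q^`M(r)) u0.
Proof.
move=> hA /affE ->; rewrite !evalp_aff => c300 c210 c201; split => [|r].
  by rewrite evalp_BBcubic; case: (bary_vertices hA) => -> _ _; rewrite /bbval c300; ring.
rewrite deriv_BBcubic evalp_deriv_aff; case: (bary_vertices hA) => -> _ _.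
rewrite /bbgrad /dot3 /bary_deriv c300 c210 c201 /edge_pt /=.
by move: hA; case: (ord2P r) => ->; rewrite /Defs.coord /area2 /= => hA; field.
Qed.

(* [Gamma] of the S_2-construction for the Taylor data of [P], the edge being [u0 u1] and
   [w] the third vertex of the neighbouring triangle. *)
Definition gamma_taylor (P : poly2) (u0 u1 u2 w : point) : R :=
  let pv x := evalp P x in let pe x y := tay1 P x (edge_pt x y) in
  let: (a0, a1, a2) := bary u0 u1 u2 w in
  (2 * a2 * (1 - a2))^-1 *
    (pe w u0 + pe w u1 - a0 ^+ 2 * (pv u0 + pe u0 u1) - 2 * a0 * a1 * (pe u0 u1 + pe u1 u0)
     - a1 ^+ 2 * (pe u1 u0 + pv u1) - 2 * a0 * a2 * pe u0 u2 - 2 * a1 * a2 * pe u1 u2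
     - a2 ^+ 2 * (pe u2 u0 + pe u2 u1)).

Lemma gamma_taylor_BBcubic (u0 u1 u2 : point) c w : area2 u0 u1 u2 != 0 ->
  (bary u0 u1 u2 w).2 != 0 -> (bary u0 u1 u2 w).2 != 1 ->
  gamma_taylor (BBcubic u0 u1 u2 c) u0 u1 u2 w = c 1 1 1.
Proof.
move=> hA; rewrite /gamma_taylor !tay1_BBcubic // !bary_edge_pt !evalp_BBcubic.
case: (bary_vertices hA) => -> -> ->; have := bary_sum w hA.
case: (bary u0 u1 u2 w) => [[a0 a1] a2] /= hs a2_neq0 a2_neq1.
have -> : a0 = 1 - a1 - a2 by rewrite -hs; ring.
rewrite /bbtaylor /bbval /bbgrad /dot3 /=; field.
by rewrite subr_eq0 eq_sym a2_neq1 a2_neq0.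
Qed.

End BernsteinBezier.

Section CubicsAreBernsteinBezier.
Variable R : realFieldType.
Local Notation point := (R * R)%type.
Local Notation poly2 := {mpoly R[2]}.
Implicit Types (c : nat -> nat -> nat -> R) (f g : poly2) (l : R * R * R).

Definition bb_span (t0 t1 t2 : poly2) f : Prop := exists c, f = bbpoly c t0 t1 t2.

Lemma bb_span0 (t0 t1 t2 : poly2) : bb_span t0 t1 t2 0.
Proof. by exists (fun _ _ _ => 0); rewrite /bbpoly !mulr0 !scale0r !addr0. Qed.

Lemma bb_spanD (t0 t1 t2 : poly2) f g :
  bb_span t0 t1 t2 f -> bb_span t0 t1 t2 g -> bb_span t0 t1 t2 (f + g).
Proof.
move=> [c1 ->] [c2 ->]; exists (fun d0 d1 d2 => c1 d0 d1 d2 + c2 d0 d1 d2).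
by rewrite /bbpoly -!mul_mpolyC; ring.
Qed.

Lemma bb_spanZ (t0 t1 t2 : poly2) a f : bb_span t0 t1 t2 f -> bb_span t0 t1 t2 (a *: f).
Proof.
move=> [c ->]; exists (fun d0 d1 d2 => a * c d0 d1 d2).
by rewrite /bbpoly -!mul_mpolyC; ring.
Qed.

Definition lin3 l (t0 t1 t2 : poly2) : poly2 := l.1.1 *: t0 + l.1.2 *: t1 + l.2 *: t2.

(* The Bernstein-Bezier coefficients of a product of three linear forms are the
   symmetrised products of their coefficients. *)
Lemma bb_span_prod3 l l' l'' (t0 t1 t2 : poly2) :
  bb_span t0 t1 t2 (lin3 l t0 t1 t2 * lin3 l' t0 t1 t2 * lin3 l'' t0 t1 t2).
Proof.
case: l => [[a0 a1] a2]; case: l' => [[b0 b1] b2]; case: l'' => [[d0 d1] d2].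
exists (fun e0 e1 e2 => match e0, e1, e2 with
  | 3, 0, 0 => a0 * b0 * d0 | 0, 3, 0 => a1 * b1 * d1 | 0, 0, 3 => a2 * b2 * d2
  | 2, 1, 0 => (a0 * b0 * d1 + a0 * b1 * d0 + a1 * b0 * d0) / 3
  | 2, 0, 1 => (a0 * b0 * d2 + a0 * b2 * d0 + a2 * b0 * d0) / 3
  | 1, 2, 0 => (a0 * b1 * d1 + a1 * b0 * d1 + a1 * b1 * d0) / 3
  | 1, 0, 2 => (a0 * b2 * d2 + a2 * b0 * d2 + a2 * b2 * d0) / 3
  | 0, 2, 1 => (a1 * b1 * d2 + a1 * b2 * d1 + a2 * b1 * d1) / 3
  | 0, 1, 2 => (a1 * b2 * d2 + a2 * b1 * d2 + a2 * b2 * d1) / 3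
  | _, _, _ => (a0 * b1 * d2 + a0 * b2 * d1 + a1 * b0 * d2 + a1 * b2 * d0
                + a2 * b0 * d1 + a2 * b1 * d0) / 6
  end).
have mulKn n (x : R) : (0 < n)%N -> n%:R * (x / n%:R) = x.
  by move=> n_gt0; rewrite mulrC divfK // pnatr_eq0 -lt0n.
by rewrite /bbpoly /lin3 /= !mulKn // -!mul_mpolyC; ring.
Qed.

Lemma lin3_barycoord (u0 u1 u2 : point) : area2 u0 u1 u2 != 0 ->
  let A := area2 u0 u1 u2 in
  let t0 := barycoord u1 u2 A in let t1 := barycoord u2 u0 A in let t2 := barycoord u0 u1 A in
  [/\ 1 = lin3 (1, 1, 1) t0 t1 t2, 'X_ix = lin3 (u0.1, u1.1, u2.1) t0 t1 t2
    & 'X_iy = lin3 (u0.2, u1.2, u2.2) t0 t1 t2].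
Proof.
move=> hA A t0 t1 t2.
have e1 : 1 = aff 1 0 0 :> poly2 by rewrite /aff !scale0r mpolyC1 !addr0.
have eX : 'X_ix = aff 0 1 0 :> poly2 by rewrite /aff scale1r scale0r mpolyC0 add0r addr0.
have eY : 'X_iy = aff 0 0 1 :> poly2 by rewrite /aff scale1r scale0r mpolyC0 !add0r.
rewrite /lin3 /t0 /t1 /t2 /barycoord /= e1 eX eY !affZ !affD.
by move: hA; rewrite /A /area2 /= => hA; split; congr aff; field.
Qed.

Lemma BBcubic_of_inP3 (u0 u1 u2 : point) (P : poly2) :
  area2 u0 u1 u2 != 0 -> inPd 3 P -> exists c, P = BBcubic u0 u1 u2 c.
Proof.
move=> hA hP; set A := area2 u0 u1 u2.
set t0 := barycoord u1 u2 A; set t1 := barycoord u2 u0 A; set t2 := barycoord u0 u1 A.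
suff [c ->] : bb_span t0 t1 t2 P by exists c; rewrite BBcubicE.
have [e1 eX eY] := lin3_barycoord hA.
have prod3 l l' l'' f : f = lin3 l t0 t1 t2 * lin3 l' t0 t1 t2 * lin3 l'' t0 t1 t2 ->
    bb_span t0 t1 t2 f by move=> ->; apply: bb_span_prod3.
have monomial a b : (a + b <= 3)%N -> bb_span t0 t1 t2 ('X_ix ^+ a * 'X_iy ^+ b).
  move=> hab; pose v1 := (1, 1, 1) : R * R * R.
  pose G k := if (k < a)%N then (u0.1, u1.1, u2.1)
              else if (k < a + b)%N then (u0.2, u1.2, u2.2) else v1.
  have eG k : lin3 (G k) t0 t1 t2 =
      if (k < a)%N then 'X_ix else if (k < a + b)%N then 'X_iy else 1.
    by rewrite /G; case: ifP => _; [rewrite eX | case: ifP => _; [rewrite eY | rewrite e1]].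
  apply: (prod3 (G 0%N) (G 1%N) (G 2%N)); rewrite !eG; clear eG G.
  by move: hab; case: a => [|[|[|[|a]]]]; case: b => [|[|[|[|b]]]] //= _; ring.
have [ex ey] : ord0 = ix /\ lift ord0 ord0 = iy by split; apply: val_inj.
rewrite (mpolyE P) big_seq; apply: big_ind => [|f g|m hm]; [exact: bb_span0|exact: bb_spanD|].
apply: bb_spanZ; rewrite mpolyXE_id !big_ord_recl big_ord0 mulr1 ey ex; apply: monomial.
have := msize_mdeg_lt hm; rewrite mdegE !big_ord_recl big_ord0 addn0 ey ex.
by move=> h; rewrite -ltnS; apply: leq_trans h hP.
Qed.

End CubicsAreBernsteinBezier.

Section Spline.
Variables (R : realFieldType) (nv nt : nat).
Variables (vert : 'I_nv -> R * R) (tri : 'I_nt -> 'I_3 -> 'I_nv).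
Local Notation point := (R * R)%type.
Local Notation poly2 := {mpoly R[2]}.
Local Notation u m p := (vert (tri m p)).
Implicit Types (Q : 'I_nv -> poly2) (m : 'I_nt).

Lemma splineE Q m : spline vert tri Q m =
  BBcubic (u m i0) (u m i1) (u m i2)
    (BBcoef vert Q (centroid_coef vert tri Q m) (tri m i0) (tri m i1) (tri m i2)).
Proof. by rewrite ffunE. Qed.

Lemma inPd3_spline Q m : inPd 3 (spline vert tri Q m).
Proof. by rewrite splineE; apply: inPd3_BBcubic. Qed.

Lemma spline_ext Q1 Q2 : (forall i, Q1 i = Q2 i) -> spline vert tri Q1 = spline vert tri Q2.
Proof. by move=> /functional_extensionality ->. Qed.

Section Linearity.
Variables (a : R) (Q1 Q2 : 'I_nv -> poly2).
Let Q i := a *: Q1 i + Q2 i.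

Lemma pv_lin i : pv vert Q i = a * pv vert Q1 i + pv vert Q2 i.
Proof. by rewrite /pv /evalp mevalD mevalZ. Qed.

Lemma pe_lin i j : pe vert Q i j = a * pe vert Q1 i j + pe vert Q2 i j.
Proof. by rewrite /pe /evalp mevalD mevalZ. Qed.

Lemma centroid_coef_lin m :
  centroid_coef vert tri Q m = a * centroid_coef vert tri Q1 m + centroid_coef vert tri Q2 m.
Proof.
have Gamma_lin i j k :
    Gamma vert tri Q m i j k = a * Gamma vert tri Q1 m i j k + Gamma vert tri Q2 m i j k.
  rewrite /Gamma; case: (nbr tri m i j) => [m'|]; last by rewrite mulr0 addr0.
  by rewrite /bary !pv_lin !pe_lin; ring.
rewrite /centroid_coef; under eq_bigr => e _ do rewrite Gamma_lin.
by rewrite big_split /= -mulr_sumr mulrDl mulrA.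
Qed.

Lemma spline_lin : spline vert tri Q = a *: spline vert tri Q1 + spline vert tri Q2.
Proof.
apply/ffunP => m; rewrite !ffunE !BBcubicE /bbpoly /= !pv_lin !pe_lin centroid_coef_lin.
by rewrite -!mul_mpolyC; ring.
Qed.

End Linearity.

Lemma spline0 : spline vert tri (fun _ => 0) = 0.
Proof.
apply: (addrI (spline vert tri (fun _ => 0))); rewrite addr0 -[X in X + _]scale1r -spline_lin.
by apply: spline_ext => i; rewrite scale1r addr0.
Qed.

Lemma spline_sum (I : Type) (r : seq I) (c : I -> R) (F : I -> 'I_nv -> poly2) :
  spline vert tri (fun i => \sum_(k <- r) c k *: F k i) =
  \sum_(k <- r) c k *: spline vert tri (F k).
Proof.
elim: r => [|k r IH]; first by rewrite big_nil -spline0; apply: spline_ext => i; rewrite big_nil.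
by rewrite big_cons -IH -spline_lin; apply: spline_ext => i; rewrite big_cons.
Qed.

Lemma spline_vertex Q m p : (forall i, inPd 1 (Q i)) -> area2 (u m i0) (u m i1) (u m i2) != 0 ->
  let i := tri m p in
  evalp (spline vert tri Q m) (vert i) = evalp (Q i) (vert i) /\
  forall r, evalp ((spline vert tri Q m)^`M(r)) (vert i) = evalp ((Q i)^`M(r)) (vert i).
Proof.
move=> HQ hA i; rewrite /i {i} splineE.
have hA1 : area2 (u m i1) (u m i2) (u m i0) != 0 by rewrite -area2_rot.
have hA2 : area2 (u m i2) (u m i0) (u m i1) != 0 by rewrite -area2_rot.
by case: (ord3P p) => ->; [|rewrite -BBcubic_rot|rewrite -2!BBcubic_rot]; apply: BBcubic_vertex.
Qed.

Definition seg_pt (a b : point) (l : R) : point :=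
  ((1 - l) * a.1 + l * b.1, (1 - l) * a.2 + l * b.2).

Definition bernstein3 (l w0 w1 w2 w3 : R) : R :=
  (1 - l) ^+ 3 * w0 + 3 * (1 - l) ^+ 2 * l * w1 + 3 * (1 - l) * l ^+ 2 * w2 + l ^+ 3 * w3.

Lemma spline_on_edge Q m p q l : area2 (u m i0) (u m i1) (u m i2) != 0 -> p != q ->
  let i := tri m p in let j := tri m q in
  evalp (spline vert tri Q m) (seg_pt (vert i) (vert j) l) =
  bernstein3 l (pv vert Q i) (pe vert Q i j) (pe vert Q j i) (pv vert Q j).
Proof.
move=> hA hpq i j; rewrite /i /j splineE evalp_BBcubic; move: hA hpq.
by case: (ord3P p) => ->; case: (ord3P q) => -> //=;
  rewrite /bbval /bary /seg_pt /bernstein3 /area2 /= => hA _; field.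
Qed.

Lemma tri_hasP m i : tri_has tri m i -> exists p, tri m p = i.
Proof. by move=> /existsP [p /eqP <-]; exists p. Qed.

Lemma spline_C0 Q : (forall i, inPd 1 (Q i)) -> is_triangulation vert tri ->
  forall m m' x, in_tri vert tri m x -> in_tri vert tri m' x ->
  evalp (spline vert tri Q m) x = evalp (spline vert tri Q m') x.
Proof.
move=> HQ [_ HA _ Hconf _] m m' x hm hm'.
have [<-|nmm] := eqVneq m m'; first by [].
have idx_neq n p q i j : tri n p = i -> tri n q = j -> i != j -> p != q.
  by move=> <- <-; apply: contraNneq => ->.
case: (Hconf m m' nmm) =>
  [Hempty|[[i [hi hi' Hx]]|[i [j [nij /andP[hi hj] /andP[hi' hj'] Hx]]]]].
- by case: (Hempty x).
- rewrite (Hx x hm hm'); have [[p <-] [p' ep']] := (tri_hasP hi, tri_hasP hi').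
  rewrite (spline_vertex p HQ (HA m)).1 -ep' (spline_vertex p' HQ (HA m')).1.
  by rewrite ep'.
- have [l [_ _ ->]] := Hx x hm hm'.
  have [[p hp] [q hq]] := (tri_hasP hi, tri_hasP hj).
  have [[p' hp'] [q' hq']] := (tri_hasP hi', tri_hasP hj').
  rewrite -[in LHS]hp -[in LHS]hq (spline_on_edge _ _ (HA m) (idx_neq _ _ _ _ _ hp hq nij)).
  rewrite -hp' -hq' (spline_on_edge _ _ (HA m') (idx_neq _ _ _ _ _ hp' hq' nij)).
  by rewrite hp hq hp' hq'.
Qed.

End Spline.

Section PlaneGeometry.
Variable R : realFieldType.
Local Notation point := (R * R)%type.

Lemma exists_third (p q : 'I_3) : p != q -> exists s, s != p /\ s != q.
Proof.
by case: (ord3P p) => ->; case: (ord3P q) => -> // _;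
  [exists i2|exists i1|exists i2|exists i0|exists i1|exists i0].
Qed.

Lemma sum3_perm (f : 'I_3 -> R) p q s : p != q -> q != s -> p != s ->
  f i0 + f i1 + f i2 = f p + f q + f s.
Proof. by case: (ord3P p) => ->; case: (ord3P q) => ->; case: (ord3P s) => -> //= _ _ _; ring. Qed.

Lemma area2_perm_neq0 (u : 'I_3 -> point) p q s : p != q -> q != s -> p != s ->
  area2 (u i0) (u i1) (u i2) != 0 -> area2 (u p) (u q) (u s) != 0.
Proof.
move=> npq nqs nps; suff [->|->] : area2 (u p) (u q) (u s) = area2 (u i0) (u i1) (u i2) \/
    area2 (u p) (u q) (u s) = - area2 (u i0) (u i1) (u i2) by rewrite ?oppr_eq0.
by move: npq nqs nps; case: (ord3P p) => ->; case: (ord3P q) => ->;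
  case: (ord3P s) => -> //= _ _ _; rewrite /area2; [left|right|right|left|left|right]; ring.
Qed.

(* If [W] lies on the parallel to [U0 U1] through [U2], the two triangles [U0 U1 U2] and
   [U0 U1 W] share a point that is interior to the first one. *)
Lemma parallel_shared_interior_point (U0 U1 U2 W : point) : area2 U0 U1 U2 != 0 ->
  area2 U0 U1 W = area2 U0 U1 U2 ->
  exists eps mu0 mu1 : R, [/\ 0 < eps < 1, 0 <= mu0, 0 <= mu1 & mu0 + mu1 + eps = 1] /\
   ((1 - eps) / 2 * U0.1 + (1 - eps) / 2 * U1.1 + eps * U2.1 =
      mu0 * U0.1 + mu1 * U1.1 + eps * W.1 /\
    (1 - eps) / 2 * U0.2 + (1 - eps) / 2 * U1.2 + eps * U2.2 =
      mu0 * U0.2 + mu1 * U1.2 + eps * W.2).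
Proof.
move=> hD E; set D := area2 U0 U1 U2 in hD E.
have [b [e1 e2]] : exists b, W.1 = U2.1 + b * (U1.1 - U0.1) /\ W.2 = U2.2 + b * (U1.2 - U0.2).
  have id1 : D * (W.1 - U2.1) =
      area2 U2 U1 W * (U1.1 - U0.1) + (area2 U0 U1 W - D) * (U2.1 - U1.1).
    by rewrite /D /area2; ring.
  have id2 : D * (W.2 - U2.2) =
      area2 U2 U1 W * (U1.2 - U0.2) + (area2 U0 U1 W - D) * (U2.2 - U1.2).
    by rewrite /D /area2; ring.
  rewrite E subrr mul0r addr0 in id1; rewrite E subrr mul0r addr0 in id2.
  exists (area2 U2 U1 W / D).
  split; rewrite [_ / D * _]mulrAC; [rewrite -id1|rewrite -id2].
    by rewrite [D * _]mulrC mulfK //; ring.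
  by rewrite [D * _]mulrC mulfK //; ring.
pose k := `|b|; have k_ge0 : 0 <= k := normr_ge0 b.
have [kb1 kb2] : - k <= b /\ b <= k by apply/andP; rewrite -ler_norml.
pose eps := (2 + 2 * k)^-1.
have eps_gt0 : 0 < eps by rewrite invr_gt0; lra.
have eps_k : eps * (2 + 2 * k) = 1 by rewrite mulVf // gt_eqF //; lra.
exists eps, ((1 - eps) / 2 + eps * b), ((1 - eps) / 2 - eps * b); split; last first.
  by rewrite e1 e2; split; ring.
have [epsb1 epsb2] : eps * - k <= eps * b /\ eps * b <= eps * k by rewrite !ler_pM2l.
have eps_lt1 : eps < 1 by rewrite invf_lt1; lra.
by split; [apply/andP; split|lra|lra|field].
Qed.

End PlaneGeometry.

Section TriangulationGeometry.
Variables (R : realFieldType) (nv nt : nat).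
Variables (vert : 'I_nv -> R * R) (tri : 'I_nt -> 'I_3 -> 'I_nv).
Hypothesis HT : is_triangulation vert tri.
Local Notation point := (R * R)%type.
Local Notation u m p := (vert (tri m p)).
Local Notation tri_has := (tri_has tri).
Local Notation in_tri := (in_tri vert tri).
Implicit Types (m : 'I_nt) (i j : 'I_nv) (p q s : 'I_3) (w : 'I_3 -> R).

Lemma tri_area_neq0 m : area2 (u m i0) (u m i1) (u m i2) != 0.
Proof. by case: HT => _ HA _ _ _; apply: HA. Qed.

Lemma tri_neq m p q : p != q -> tri m p != tri m q.
Proof.
move=> npq; have [s [nsp nsq]] := exists_third npq.
have nqs : q != s by rewrite eq_sym.
have nps : p != s by rewrite eq_sym.
have := @area2_perm_neq0 _ (fun t => u m t) _ _ _ npq nqs nps (tri_area_neq0 m).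
by apply: contra_neq => /= e; rewrite e /area2; ring.
Qed.

Lemma nbrP m i j m' : nbr tri m i j = Some m' -> [/\ m' != m, tri_has m' i & tri_has m' j].
Proof. by rewrite /nbr; case: pickP => // m'' /andP[/andP[? ?] ?] [<-]. Qed.

Lemma oppP m' i j : tri_has m' i -> tri_has m' j -> i != j ->
  [/\ tri_has m' (Defs.opp tri m' i j), Defs.opp tri m' i j != i & Defs.opp tri m' i j != j].
Proof.
move=> /tri_hasP[p <-] /tri_hasP[q <-] nij.
have npq : p != q by apply: contraNneq nij => ->.
have [s [nsp nsq]] := exists_third npq.
rewrite /Defs.opp; case: pickP => [k /andP[/andP[-> ->] ->] //|none].
have := none (tri m' s); rewrite (tri_neq m' nsp) (tri_neq m' nsq) !andbT /Defs.tri_has.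
by move/negbT/existsPn/(_ s); rewrite eqxx.
Qed.

Definition wsum m w : point :=
  (w i0 * (u m i0).1 + w i1 * (u m i1).1 + w i2 * (u m i2).1,
   w i0 * (u m i0).2 + w i1 * (u m i1).2 + w i2 * (u m i2).2).

Lemma in_tri_wsum m w : (forall t, 0 <= w t) -> w i0 + w i1 + w i2 = 1 -> in_tri m (wsum m w).
Proof. by move=> w_ge0 w_sum; exists (w i0), (w i1), (w i2). Qed.

Lemma in_tri_vertex m p : in_tri m (u m p).
Proof.
pose w t : R := (t == p)%:R.
have -> : u m p = wsum m w.
  by rewrite /wsum /w; case: (ord3P p) => ->; rewrite /= !mul1r !mul0r ?add0r ?addr0; case: (u m _).
by apply: in_tri_wsum => [t|]; rewrite /w ?ler0n //; case: (ord3P p) => -> /=; ring.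
Qed.

Lemma area2_wsum m w p q s : p != q -> q != s -> p != s -> w i0 + w i1 + w i2 = 1 ->
  area2 (u m p) (u m q) (wsum m w) = w s * area2 (u m p) (u m q) (u m s).
Proof.
move=> npq nqs nps w_sum; rewrite /wsum.
rewrite (sum3_perm (fun t => w t * (u m t).1) npq nqs nps).
rewrite (sum3_perm (fun t => w t * (u m t).2) npq nqs nps) /=.
have -> : w p = 1 - w q - w s by rewrite -w_sum (sum3_perm w npq nqs nps); ring.
by rewrite /area2 /=; ring.
Qed.

Lemma interior_not_on_seg m w p q : (forall t, 0 < w t) -> w i0 + w i1 + w i2 = 1 -> p != q ->
  ~ in_seg (u m p) (u m q) (wsum m w).
Proof.
move=> w_gt0 w_sum npq [l [_ _ e]].
have [s [nsp nsq]] := exists_third npq.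
have nqs : q != s by rewrite eq_sym.
have nps : p != s by rewrite eq_sym.
have := area2_wsum m npq nqs nps w_sum; rewrite e.
have -> : area2 (u m p) (u m q) ((1 - l) * (u m p).1 + l * (u m q).1,
  (1 - l) * (u m p).2 + l * (u m q).2) = 0 by rewrite /area2 /=; ring.
move/esym/eqP; rewrite mulf_eq0 (gt_eqF (w_gt0 s)) /=.
exact/negP/(@area2_perm_neq0 _ (fun t => u m t) _ _ _ npq nqs nps (tri_area_neq0 m)).
Qed.

Lemma shared_edge_no_common_interior m m' w i j :
  m != m' -> tri_has m i -> tri_has m' i -> tri_has m j -> tri_has m' j -> i != j ->
  (forall t, 0 < w t) -> w i0 + w i1 + w i2 = 1 -> ~ in_tri m' (wsum m w).
Proof.
move=> nmm hi hi' hj hj' nij w_gt0 w_sum hxm'.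
have hxm : in_tri m (wsum m w) by apply: in_tri_wsum => // t; apply: ltW.
case: HT => vert_inj _ _ Hconf _.
case: (Hconf m m' nmm) => [Hempty|[[k [_ _ Hx]]|[i' [j' [nij' /andP[hi'' hj''] _ Hx]]]]].
- by case: (Hempty (wsum m w)).
- have [[p ep] [q eq]] := (tri_hasP hi, tri_hasP hj).
  have [[p' ep'] [q' eq']] := (tri_hasP hi', tri_hasP hj').
  have vi : vert i = vert k by apply: Hx; [rewrite -ep|rewrite -ep']; apply: in_tri_vertex.
  have vj : vert j = vert k by apply: Hx; [rewrite -eq|rewrite -eq']; apply: in_tri_vertex.
  by move: nij; rewrite (vert_inj _ _ (etrans vi (esym vj))) eqxx.
- have [[a ea] [b eb]] := (tri_hasP hi'', tri_hasP hj'').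
  have nab : a != b by apply: contraNneq nij' => e; rewrite -ea -eb e.
  by apply: (interior_not_on_seg (m := m) w_gt0 w_sum nab); rewrite ea eb; apply: Hx.
Qed.

Lemma tri_has_vertex m p : tri_has m (tri m p).
Proof. by apply/existsP; exists p. Qed.

Lemma parallel_overlap m m' p q s p' q' s' :
  p != q -> q != s -> p != s -> p' != q' -> q' != s' -> p' != s' ->
  u m' p' = u m p -> u m' q' = u m q ->
  area2 (u m p) (u m q) (u m' s') = area2 (u m p) (u m q) (u m s) ->
  exists2 w, (forall t, 0 < w t) /\ w i0 + w i1 + w i2 = 1 & in_tri m' (wsum m w).
Proof.
move=> npq nqs nps npq' nqs' nps' ep' eq' E.
have hA := @area2_perm_neq0 _ (fun t => u m t) _ _ _ npq nqs nps (tri_area_neq0 m).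
have [eps [mu0 [mu1 [[/andP[eps_gt0 eps_lt1] mu0_ge0 mu1_ge0 mu_sum] [x1 x2]]]]] :=
  parallel_shared_interior_point hA E.
pose w t := if t == s then eps else (1 - eps) / 2.
exists w.
  split=> [t|]; first by rewrite /w; case: (t == s) => //; lra.
  by rewrite (sum3_perm w npq nqs nps) /w eqxx (negbTE nps) (negbTE nqs); field.
pose w' t := if t == p' then mu0 else if t == q' then mu1 else eps.
have ns'p' : (s' == p') = false by rewrite eq_sym (negbTE nps').
have ns'q' : (s' == q') = false by rewrite eq_sym (negbTE nqs').
have -> : wsum m w = wsum m' w'.
  rewrite /wsum (sum3_perm (fun t => w t * (u m t).1) npq nqs nps).
  rewrite (sum3_perm (fun t => w t * (u m t).2) npq nqs nps).
  rewrite (sum3_perm (fun t => w' t * (u m' t).1) npq' nqs' nps').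
  rewrite (sum3_perm (fun t => w' t * (u m' t).2) npq' nqs' nps') /w /w' /=.
  rewrite eqxx (negbTE nps) (negbTE nqs) eqxx (eq_sym q') (negbTE npq') eqxx ns'p' ns'q'.
  by rewrite ep' eq' -x1 -x2.
apply: in_tri_wsum => [t|]; first by rewrite /w'; do 2?case: ifP => // _; apply: ltW.
by rewrite (sum3_perm w' npq' nqs' nps') /w' eqxx (eq_sym q') (negbTE npq') eqxx ns'p' ns'q'.
Qed.

(* [a2 != 0]: the neighbour is non-degenerate; [a2 != 1]: otherwise the two triangles
   would share an interior point, contradicting conformity. *)
Lemma nbr_opp_bary m p q s m' : p != q -> q != s -> p != s ->
  nbr tri m (tri m p) (tri m q) = Some m' ->
  let a2 := (bary (u m p) (u m q) (u m s) (vert (Defs.opp tri m' (tri m p) (tri m q)))).2 in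
  a2 != 0 /\ a2 != 1.
Proof.
move=> npq nqs nps hn; have [nm'm hi hj] := nbrP hn.
have nij := tri_neq m npq; have [hk nki nkj] := oppP hi hj nij.
set k := Defs.opp _ _ _ _ in hk nki nkj *.
have [[[p' ep'] [q' eq']] [s' es']] := (tri_hasP hi, tri_hasP hj, tri_hasP hk).
have npq' : p' != q' by apply: contraNneq nij => e; rewrite -ep' -eq' e.
have nqs' : q' != s' by apply: contraNneq nkj => e; rewrite -eq' -es' e.
have nps' : p' != s' by apply: contraNneq nki => e; rewrite -ep' -es' e.
have hA := @area2_perm_neq0 _ (fun t => u m t) _ _ _ npq nqs nps (tri_area_neq0 m).
rewrite /bary /=; split.
  rewrite mulf_neq0 ?invr_eq0 // -ep' -eq' -es'.
  exact: (@area2_perm_neq0 _ (fun t => u m' t)) (tri_area_neq0 m').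
apply/eqP => a2_eq1; have E : area2 (u m p) (u m q) (u m' s') = area2 (u m p) (u m q) (u m s).
  by rewrite es' -[LHS](divfK hA) a2_eq1 mul1r.
have [w [w_gt0 w_sum] hxm'] :=
  parallel_overlap npq nqs nps npq' nqs' nps' (congr1 vert ep') (congr1 vert eq') E.
apply: (shared_edge_no_common_interior (m := m) _ (tri_has_vertex m p) hi
          (tri_has_vertex m q) hj nij w_gt0 w_sum hxm').
by rewrite eq_sym.
Qed.

End TriangulationGeometry.

Section Reproduction.
Variables (R : realFieldType) (nv nt : nat).
Variables (vert : 'I_nv -> R * R) (tri : 'I_nt -> 'I_3 -> 'I_nv).
Hypothesis HT : is_triangulation vert tri.
Local Notation poly2 := {mpoly R[2]}.
Local Notation u m p := (vert (tri m p)).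
Variable P : poly2.

Lemma evalp_taylor1 i y : evalp (taylor1 vert P i) y = tay1 P (vert i) y.
Proof.
rewrite /taylor1 /tay1 !big_ord_recl !big_ord0 /evalp.
by rewrite !(mevalD, mevalM, mevalN, mevalC, mevalXU) /Defs.coord /=; ring.
Qed.

Lemma pv_taylor1 i : pv vert (taylor1 vert P) i = evalp P (vert i).
Proof. by rewrite /pv evalp_taylor1 /tay1 big1 ?addr0 // => r _; rewrite subrr mulr0. Qed.

Lemma pe_taylor1 i j :
  pe vert (taylor1 vert P) i j = tay1 P (vert i) (edge_pt (vert i) (vert j)).
Proof. exact: evalp_taylor1. Qed.

Lemma inPd1_taylor1 i : inPd 1 (taylor1 vert P i).
Proof.
have [ex ey] : ord0 = ix /\ lift ord0 ord0 = iy by split; apply: val_inj.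
pose d r := evalp (P^`M(r)) (vert i).
suff -> : taylor1 vert P i =
    aff (evalp P (vert i) - d ix * (vert i).1 - d iy * (vert i).2) (d ix) (d iy).
  exact: inPd1_aff.
rewrite /taylor1 !big_ord_recl big_ord0 ey ex /aff /d /Defs.coord /= -!mul_mpolyC.
by rewrite !raddfB /=; ring.
Qed.

Lemma Gamma_taylor1 m i j k m' : nbr tri m i j = Some m' ->
  Gamma vert tri (taylor1 vert P) m i j k =
  gamma_taylor P (vert i) (vert j) (vert k) (vert (Defs.opp tri m' i j)).
Proof. by rewrite /Gamma => ->; rewrite !pv_taylor1 !pe_taylor1. Qed.

Lemma centroid_coef_taylor1 m c : every_tri_has_interior_edge tri ->
  P = BBcubic (u m i0) (u m i1) (u m i2) c -> centroid_coef vert tri (taylor1 vert P) m = c 1 1 1.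
Proof.
move=> He eP; rewrite /centroid_coef; set ie := [seq e <- _ | _].
have Gamma_edge p q s c' : p != q -> q != s -> p != s ->
    P = BBcubic (u m p) (u m q) (u m s) c' -> c' 1 1 1 = c 1 1 1 ->
    interior_edge tri m (tri m p) (tri m q) ->
    Gamma vert tri (taylor1 vert P) m (tri m p) (tri m q) (tri m s) = c 1 1 1.
  move=> npq nqs nps eP' <-; rewrite /interior_edge; case hn: nbr => [m'|] // _.
  have [a2_neq0 a2_neq1] := nbr_opp_bary HT npq nqs nps hn.
  rewrite (Gamma_taylor1 _ hn) eP'; apply: gamma_taylor_BBcubic => //.
  exact: (@area2_perm_neq0 _ (fun t => u m t)) (tri_area_neq0 HT m).
have GammaE e : e \in ie -> Gamma vert tri (taylor1 vert P) m e.1.1 e.1.2 e.2 = c 1 1 1.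
  rewrite mem_filter => /andP[hint]; rewrite !inE => /or3P[] /eqP e_eq; rewrite e_eq /= in hint *.
  - exact: (Gamma_edge i0 i1 i2 c).
  - by apply: (Gamma_edge i1 i2 i0 (fun d0 d1 d2 => c d2 d0 d1)) => //; rewrite BBcubic_rot.
  - by apply: (Gamma_edge i2 i0 i1 (fun d0 d1 d2 => c d1 d2 d0)) => //; rewrite -[RHS]BBcubic_rot.
have ie_gt0 : (0 < size ie)%N by rewrite size_filter -has_count /= orbF; apply: He.
rewrite (eq_big_seq (fun _ => c 1 1 1)) // big_const_seq count_predT iter_addr_0.
by rewrite -[c 1 1 1 *+ _]mulr_natr mulfK // pnatr_eq0 -lt0n.
Qed.

Lemma spline_taylor1 m : every_tri_has_interior_edge tri -> inPd 3 P ->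
  spline vert tri (taylor1 vert P) m = P.
Proof.
move=> He hP; have hA := tri_area_neq0 HT m; have [c eP] := BBcubic_of_inP3 hA hP.
have hA1 : area2 (u m i1) (u m i2) (u m i0) != 0 by rewrite -area2_rot.
have hA2 : area2 (u m i2) (u m i0) (u m i1) != 0 by rewrite -area2_rot.
have [v0 e01 e02] := BBcubic_taylor_u0 c hA.
have [v1 e12 e10] := BBcubic_taylor_u0 (fun d0 d1 d2 => c d2 d0 d1) hA1.
have [v2 e20 e21] := BBcubic_taylor_u0 (fun d0 d1 d2 => c d1 d2 d0) hA2.
rewrite BBcubic_rot in v1 e12 e10; rewrite -BBcubic_rot /= in v2 e20 e21.
rewrite splineE (centroid_coef_taylor1 He eP) [RHS]eP !BBcubicE /bbpoly /=.
by rewrite !pv_taylor1 !pe_taylor1 eP v0 v1 v2 e01 e02 e12 e10 e20 e21.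
Qed.

End Reproduction.

Section Dimension.
Variables (R : realFieldType) (nv nt : nat).
Variables (vert : 'I_nv -> R * R) (tri : 'I_nt -> 'I_3 -> 'I_nv).
Hypothesis HT : is_triangulation vert tri.
Local Notation poly2 := {mpoly R[2]}.

Lemma spline_eq0 Q : (forall i, inPd 1 (Q i)) -> spline vert tri Q = 0 -> forall i, Q i = 0.
Proof.
move=> HQ Q0 i; case: HT => _ _ cover _ _; have [m /tri_hasP[p ep]] := cover i.
have [] := @spline_vertex _ _ _ vert tri Q m p HQ (tri_area_neq0 HT m); rewrite Q0 ffunE ep => v dQ.
have e0 r x : evalp ((0 : poly2)^`M(r)) x = 0 by rewrite mderiv0 /evalp meval0.
rewrite (affE (HQ i)) in v dQ *; move: (dQ ix) (dQ iy) v.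
rewrite !e0 !evalp_deriv_aff evalp_aff /Defs.coord /= => <- <-.
by rewrite {1}/evalp meval0 !mul0r !addr0 => <-; rewrite /aff !scale0r mpolyC0 !addr0.
Qed.

Definition aff_basis (k : 'I_(3 * nv)) (i : 'I_nv) : poly2 :=
  aff (k == mxvec_index i0 i)%:R (k == mxvec_index i1 i)%:R (k == mxvec_index i2 i)%:R.

Lemma sum_aff_basis (c : 'I_(3 * nv) -> R) i :
  \sum_k c k *: aff_basis k i =
  aff (c (mxvec_index i0 i)) (c (mxvec_index i1 i)) (c (mxvec_index i2 i)).
Proof.
have pick K : \sum_k c k * (k == K)%:R = c K.
  by rewrite (bigD1 K) //= eqxx mulr1 big1 ?addr0 // => k /negbTE ->; rewrite mulr0.
under eq_bigr do rewrite affZ.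
by rewrite /aff !big_split /= -!scaler_suml -raddf_sum !pick.
Qed.

Lemma has_dim_S2 : has_dim (inS2 vert tri) (3 * nv).
Proof.
exists (fun k => spline vert tri (aff_basis k)); split.
- by move=> k; exists (aff_basis k); split => // i; apply: inPd1_aff.
- move=> c hc k; have := spline_eq0 (Q := fun i => \sum_k c k *: aff_basis k i).
  rewrite spline_sum hc => /(_ _ erefl) Q0.
  have {}Q0 i : aff (c (mxvec_index i0 i)) (c (mxvec_index i1 i)) (c (mxvec_index i2 i)) = 0.
    by rewrite -sum_aff_basis; apply: Q0 => j; rewrite sum_aff_basis; apply: inPd1_aff.
  by case/mxvec_indexP: k => t i; have [c0 c1 c2] := aff_eq0 (Q0 i); case: (ord3P t) => ->.
- move=> s [Q [HQ ->]].
  exists (mxvec (\matrix_(t < 3, i < nv) [:: (Q i)@_0; (Q i)@_U_(ix); (Q i)@_U_(iy)]`_t) 0).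
  rewrite -spline_sum; apply: spline_ext => i.
  by rewrite sum_aff_basis !mxvecE !mxE /=; apply: affE.
Qed.

End Dimension.

Theorem mainTheorem1 (R : realFieldType) (nv nt : nat)
    (vert : 'I_nv -> R * R) (tri : 'I_nt -> 'I_3 -> 'I_nv) :
  is_triangulation vert tri ->
  every_tri_has_interior_edge tri ->
  (* (i) S_2 is a linear subspace of the C^0 piecewise cubics *)
  [/\ (forall s, inS2 vert tri s -> C0cubic vert tri s)
      /\ inS2 vert tri 0
      /\ (forall (a : R) s1 s2, inS2 vert tri s1 -> inS2 vert tri s2 ->
            inS2 vert tri (a *: s1 + s2)),
  (* (ii) C^1 at the vertices *)
      forall Q : 'I_nv -> {mpoly R[2]}, (forall i, inPd 1 (Q i)) ->
        forall (i : 'I_nv) (m : 'I_nt), tri_has tri m i ->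
          evalp (spline vert tri Q m) (vert i) = evalp (Q i) (vert i) /\
          (forall r : 'I_2,
             evalp ((spline vert tri Q m)^`M(r)) (vert i) = evalp ((Q i)^`M(r)) (vert i)),
  (* (iii) dim S_2 = 3 n_v *)
      has_dim (inS2 vert tri) (3 * nv) &
  (* (iv) P_3 is contained in S_2, reproduced through Taylor data *)
      forall P : {mpoly R[2]}, inPd 3 P ->
        spline vert tri (taylor1 vert P) = [ffun => P] /\ inS2 vert tri [ffun => P]].
Proof.
move=> HT He; split.
- split; [|split].
  + by move=> s [Q [HQ ->]]; split=> [m|]; [apply: inPd3_spline|apply: spline_C0].
  + by exists (fun _ => 0); rewrite spline0; split=> // i; rewrite /inPd msize0.
  + move=> a _ _ [Q1 [HQ1 ->]] [Q2 [HQ2 ->]]; exists (fun i => a *: Q1 i + Q2 i).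
    by rewrite spline_lin; split=> // i; apply: inPdD; [apply: inPdZ|].
- move=> Q HQ i m /tri_hasP[p <-]; exact: spline_vertex HQ (tri_area_neq0 HT m).
- exact: has_dim_S2.
- move=> P hP; have reproduce : spline vert tri (taylor1 vert P) = [ffun => P].
    by apply/ffunP => m; rewrite [RHS]ffunE; apply: spline_taylor1.
  by split=> //; exists (taylor1 vert P); split=> // i; apply: inPd1_taylor1.
Qed.
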